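(* Let $\mathcal A=\{a_1,\dots,a_n\}\subset\mathbb Z^d$ with $n\ge d+2$ and $d$-dimensional convex hull. Let $\Delta_1,\dots,\Delta_p$ ($p\ge1$) be $d$-simplices of $\mathcal A$ which all occur in some (common) regular subdivision of $\mathcal A$, and let $I_k$ be the index set of the vertices of $\Delta_k$, $k=1,\dots,p$. Then the cone $\mathcal C_{\Delta_1,\dots,\Delta_p}$ of all height vectors $h\in\mathbb R^n$ inducing a regular subdivision of $\mathcal A$ containing $\Delta_1,\dots,\Delta_p$ is a nonempty open polyhedral cone defined by the linear inequalities \[ \langle d_{I_k}\cdot m^{I_k}_i,h\rangle>0\quad\text{for all }k=1,\dots,p\text{ and all } i\notin I_k, \] and the vectors $\{d_{I_k}\cdot m^{I_k}_i:\ k=1,\dots,p,\ i\notin I_k\}$ generate the kernel of $A$.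
   Context: Let $A\in\mathbb Z^{(d+1)\times n}$ be the matrix whose $j$-th column is $(1,a_j)^t$, and for $h\in\mathbb R^n$ let $A_h$ be $A$ with the extra last row $h$. A $d$-simplex of $\mathcal A$ is a subset of $d+1$ affinely independent points. For an index set $I=\{i_1<\dots<i_{d+1}\}$ of a $d$-simplex, $d_I$ is the determinant of the columns of $A$ indexed by $I$; for $i\notin I$, $d_{I\cup\{i\}}(h)$ is the determinant of the columns of $A_h$ indexed by $I\cup\{i\}$ times the sign of the permutation sending the increasingly ordered $I\cup\{i\}$ to $(i_1,\dots,i_{d+1},i)$, and $m^I_i\in\mathbb R^n$ is the vector with $d_{I\cup\{i\}}(h)=\langle m^I_i,h\rangle$ for all $h$. Regular subdivisions: for $h\in\mathbb R^n$, lift $a_j$ to $(a_j,h_j)$; lower faces of the convex hull of the lifted points are faces with an inner normal having positive last coordinate; each lower face $F$ gives the cell $\{a_j:(a_j,h_j)\in F\}$, and the collection of cells is the regular subdivision induced by $h$. A simplex occurs in / is contained in a subdivision if it is one of its cells. *)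

From HB Require Import structures.
From mathcomp Require Import all_boot all_order all_algebra.
From mathcomp Require Import reals.
Set Implicit Arguments. Unset Strict Implicit. Unset Printing Implicit Defensive.
Import Order.TTheory GRing.Theory Num.Theory.
Local Open Scope ring_scope.

Section Defs.
Variables (R : realType) (d n : nat).

Definition dotv (k : nat) (u v : 'rV[R]_k) : R := \sum_(i < k) u 0 i * v 0 i.

Definition ptR (a : 'I_n -> 'rV[int]_d) (j : 'I_n) : 'rV[R]_d :=
  map_mx (fun z : int => z%:~R) (a j).

Definition Amx (a : 'I_n -> 'rV[int]_d) : 'M[R]_(1 + d, n) :=
  col_mx (const_mx 1) (\matrix_(r < d, j < n) ptR a j 0 r).

Definition Ahmx (a : 'I_n -> 'rV[int]_d) (h : 'rV[R]_n) : 'M[R]_(1 + d + 1, n) :=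
  col_mx (Amx a) h.

(* The square matrix whose k-th column is the column of M indexed by the
   k-th entry of the sequence s (zero column if s is too short). *)
Definition colsq (m : nat) (M : 'M[R]_(m, n)) (s : seq 'I_n) : 'M[R]_m :=
  \matrix_(r < m, k < m) oapp (fun j => M r j) 0 (nth None (map Some s) k).

Definition aff_indep (a : 'I_n -> 'rV[int]_d) (I : {set 'I_n}) : Prop :=
  forall lam : 'I_n -> R, (forall j, j \notin I -> lam j = 0) ->
    \sum_j lam j = 0 -> \sum_j lam j *: ptR a j = 0 -> forall j, lam j = 0.

Definition is_dsimplex (a : 'I_n -> 'rV[int]_d) (I : {set 'I_n}) : Prop :=
  #|I| = d.+1 /\ aff_indep a I.

(* d_I : determinant of the columns of A indexed by I (enum I lists I in
   increasing order). *)
Definition dI (a : 'I_n -> 'rV[int]_d) (I : {set 'I_n}) : R :=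
  \det (colsq (Amx a) (enum I)).

(* d_{I u {i}}(h) : determinant of the columns of A_h in the order
   (i_1, ..., i_{d+1}, i), i.e. the determinant of the increasingly ordered
   columns times the sign of the reordering permutation. *)
Definition dIi (a : 'I_n -> 'rV[int]_d) (I : {set 'I_n}) (i : 'I_n)
  (h : 'rV[R]_n) : R :=
  \det (colsq (Ahmx a h) (rcons (enum I) i)).

Definition liftpt (a : 'I_n -> 'rV[int]_d) (h : 'rV[R]_n) (j : 'I_n)
  : 'rV[R]_(d + 1) := row_mx (ptR a j) (h 0 j)%:M.

Definition in_conv (a : 'I_n -> 'rV[int]_d) (h : 'rV[R]_n) (x : 'rV[R]_(d + 1))
  : Prop :=
  exists lam : 'I_n -> R, (forall j, 0 <= lam j) /\ \sum_j lam j = 1 /\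
    x = \sum_j lam j *: liftpt a h j.

Definition on_face (a : 'I_n -> 'rV[int]_d) (h : 'rV[R]_n) (w : 'rV[R]_(d + 1))
  (x : 'rV[R]_(d + 1)) : Prop :=
  in_conv a h x /\ forall y, in_conv a h y -> dotv w x <= dotv w y.

(* C is a cell of the regular subdivision induced by h : C is the set of
   indices of lifted points lying on some lower face, i.e. a face with an
   inner normal w having positive last coordinate. *)
Definition is_cell (a : 'I_n -> 'rV[int]_d) (h : 'rV[R]_n) (C : {set 'I_n})
  : Prop :=
  exists w : 'rV[R]_(d + 1), 0 < w 0 (rshift d (0 : 'I_1)) /\
    forall j, (j \in C) <-> on_face a h w (liftpt a h j).

(* the convex hull of A is d-dimensional: its affine hull is R^d *)
Definition full_dim (a : 'I_n -> 'rV[int]_d) : Prop :=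
  forall x : 'rV[R]_d, exists lam : 'I_n -> R,
    \sum_j lam j = 1 /\ x = \sum_j lam j *: ptR a j.

End Defs.

Arguments is_cell R {d n} a h C.
Arguments dIi R {d n} a I i h.
Arguments on_face R {d n} a h w x.
Arguments in_conv R {d n} a h x.
Arguments liftpt R {d n} a h j.

From HB Require Import structures.
From mathcomp Require Import all_boot all_order all_algebra.
From mathcomp Require Import reals.
From mathcomp Require Import ring lra.
Set Implicit Arguments. Unset Strict Implicit. Unset Printing Implicit Defensive.
Import Order.TTheory GRing.Theory Num.Theory.
Local Open Scope ring_scope.

(* For a d-simplex I, the columns of A indexed by I form an invertible matrix B,
   so every height vector h has a unique affine interpolant rho_h on I, and a
   Schur complement expansion along the last row gives
   d_{I u {i}}(h) = d_I (h_i - rho_h(a_i)).  I is a cell of the subdivision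
   induced by h iff some affine function agrees with h on I and lies strictly
   below h elsewhere, i.e. iff h_i > rho_h(a_i) for every i outside I;
   multiplying by d_I^2 > 0 turns this into <d_I m_i, h> > 0.  Each m_i lies in
   ker A, because a row of A is its own interpolant, and its coordinates outside
   I are d_I delta_ij.  Hence for v in ker A, the vector
   v - sum_{i not in I} (v_i / d_I^2) d_I m_i lies in ker A and is supported on
   I, so it vanishes by affine independence. *)

Section DotProduct.
Variable R : realType.
Implicit Types k : nat.

Lemma dotvC k (u v : 'rV[R]_k) : dotv u v = dotv v u.
Proof. by apply: eq_bigr => i _; rewrite mulrC. Qed.

Lemma dotvZl k c (u v : 'rV[R]_k) : dotv (c *: u) v = c * dotv u v.
Proof. by rewrite /dotv mulr_sumr; apply: eq_bigr => i _; rewrite mxE mulrA. Qed.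

Lemma dotvNl k (u v : 'rV[R]_k) : dotv (- u) v = - dotv u v.
Proof. by rewrite -scaleN1r dotvZl mulN1r. Qed.

Lemma dotv_suml k (T : finType) (P : pred T) (F : T -> 'rV[R]_k) v :
  dotv (\sum_(t | P t) F t) v = \sum_(t | P t) dotv (F t) v.
Proof.
by rewrite /dotv exchange_big; apply: eq_bigr => j _; rewrite summxE mulr_suml.
Qed.

Lemma dotv_row_mx k1 k2 (u u' : 'rV[R]_k1) (v v' : 'rV[R]_k2) :
  dotv (row_mx u v) (row_mx u' v') = dotv u u' + dotv v v'.
Proof.
by rewrite /dotv big_split_ord; congr (_ + _); apply: eq_bigr => i _;
  rewrite !(row_mxEl, row_mxEr).
Qed.

Lemma dotv_delta k (u : 'rV[R]_k) j : dotv u (delta_mx 0 j) = u 0 j.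
Proof.
rewrite /dotv (bigD1 j) //= mxE !eqxx mulr1 big1 ?addr0 // => l /negbTE ljF.
by rewrite mxE ljF andbF mulr0.
Qed.

Lemma mulmx_tr_eq0 q k (M : 'M[R]_(q, k)) (v : 'rV[R]_k) :
  M *m v^T = 0 <-> forall r, dotv v (row r M) = 0.
Proof.
have entryE r : (M *m v^T) r 0 = dotv v (row r M).
  by rewrite mxE; apply: eq_bigr => j _; rewrite !mxE mulrC.
split => [Mv0 r | v_orth]; first by rewrite -entryE Mv0 mxE.
by apply/matrixP => r c; rewrite (ord1 c) entryE v_orth mxE.
Qed.

End DotProduct.

Lemma det_block_schur (R : comUnitRingType) k (B : 'M[R]_k) (x : 'cV_k)
    (y : 'rV_k) (c : 'M_1) : B \in unitmx ->
  \det (block_mx B x y c) = \det B * \det (c - y *m invmx B *m x).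
Proof.
move=> uB.
have -> : block_mx B x y c = block_mx 1%:M 0 (y *m invmx B) 1%:M
                             *m block_mx B x 0 (c - y *m invmx B *m x).
  rewrite mulmx_block !mul1mx !mul0mx !addr0 mulmxKV //.
  by rewrite -mulmxA addrC subrK.
by rewrite det_mulmx det_lblock det_ublock !det1 !mul1r.
Qed.

Section PointConfiguration.
Variables (R : realType) (d n : nat) (a : 'I_n -> 'rV[int]_d).
Local Notation A := (Amx R a).

Lemma AmxEu j : A (lshift d 0) j = 1.
Proof. by rewrite col_mxEu mxE. Qed.

Lemma AmxEd r j : A (rshift 1 r) j = ptR R a j 0 r.
Proof. by rewrite col_mxEd mxE. Qed.

Lemma aff_indep_ker (I : {set 'I_n}) (v : 'rV[R]_n) : aff_indep R a I ->
  (forall j, j \notin I -> v 0 j = 0) -> A *m v^T = 0 -> v = 0.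
Proof.
move=> affI vI /mulmx_tr_eq0 vA; apply/rowP => j; rewrite mxE.
apply: (affI (fun j => v 0 j)) => //.
  rewrite -[RHS](vA (lshift d 0)).
  by apply: eq_bigr => l _; rewrite mxE AmxEu mulr1.
apply/rowP => r; rewrite summxE [RHS]mxE -[RHS](vA (rshift 1 r)).
by apply: eq_bigr => l _; rewrite [LHS]mxE [in RHS]mxE AmxEd.
Qed.

Lemma mulmx_AmxE (rho : 'rV[R]_(1 + d)) j :
  (rho *m A) 0 j = rho 0 (lshift d 0) + dotv (rsubmx rho) (ptR R a j).
Proof.
rewrite mxE big_split_ord /= big_ord1 AmxEu mulr1; congr (_ + _).
by apply: eq_bigr => r _; rewrite AmxEd [rsubmx _ _ _]mxE.
Qed.

(* [(rho *m A) 0 j] is the value at [a_j] of the affine function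
   [x |-> rho_0 + <(rho_1, ..., rho_d), x>]. *)
Definition supporting_affine (h : 'rV[R]_n) (C : {set 'I_n})
    (rho : 'rV[R]_(1 + d)) : Prop :=
  (forall j, j \in C -> (rho *m A) 0 j = h 0 j) /\
  (forall i, i \notin C -> (rho *m A) 0 i < h 0 i).

Variable h : 'rV[R]_n.

Lemma dotv_liftpt (w : 'rV[R]_(d + 1)) j :
  dotv w (liftpt R a h j) =
    dotv (lsubmx w) (ptR R a j) + w 0 (rshift d 0) * h 0 j.
Proof.
rewrite -{1}(hsubmxK w) dotv_row_mx; congr (_ + _).
by rewrite /dotv big_ord1 !mxE eqxx mulr1n.
Qed.

Lemma in_conv_liftpt j : in_conv R a h (liftpt R a h j).
Proof.
exists (fun l => (l == j)%:R); split=> [l|]; first by rewrite ler0n.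
by split; rewrite (bigD1 j) //= eqxx ?scale1r big1 ?addr0 // => l /negbTE ->;
  rewrite ?scale0r.
Qed.

Lemma in_conv_dotv_ge (w : 'rV[R]_(d + 1)) c y :
  (forall j, c <= dotv w (liftpt R a h j)) -> in_conv R a h y -> c <= dotv w y.
Proof.
move=> c_le [lam [lam_ge0 [lam_sum1 ->]]].
rewrite dotvC dotv_suml -[c]mul1r -lam_sum1 mulr_suml.
by apply: ler_sum => j _; rewrite dotvZl dotvC ler_wpM2l.
Qed.

Lemma cell_supporting_affine (C : {set 'I_n}) j1 : j1 \in C ->
  is_cell R a h C -> exists rho, supporting_affine h C rho.
Proof.
move=> j1C [w [s_gt0 onC]].
set s := w 0 (rshift d 0) in s_gt0; set u := lsubmx w.
pose g j := dotv w (liftpt R a h j).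
have gE j : g j = dotv u (ptR R a j) + s * h 0 j by rewrite /g dotv_liftpt.
have [_ g1_min] := (onC j1).1 j1C.
have g1_le j : g j1 <= g j := g1_min _ (in_conv_liftpt j).
have gC j : j \in C -> g j = g j1.
  move=> jC; apply/eqP; rewrite eq_le g1_le andbT.
  exact: ((onC j).1 jC).2 _ (in_conv_liftpt j1).
have g1_lt i : i \notin C -> g j1 < g i.
  move=> iC; rewrite ltNge; apply/negP => gi_le; move/negP: iC; apply.
  apply/onC; split=> [|y y_conv]; first exact: in_conv_liftpt.
  exact: le_trans gi_le (g1_min y y_conv).
pose rho : 'rV[R]_(1 + d) := row_mx ((g j1 / s)%:M) (- s^-1 *: u).
have rhoE j : (rho *m A) 0 j = (g j1 - dotv u (ptR R a j)) / s.
  rewrite mulmx_AmxE row_mxKr row_mxEl mxE eqxx mulr1n dotvZl.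
  by rewrite mulrBl mulNr [s^-1 * _]mulrC.
exists rho; split=> [j jC | i iC]; rewrite rhoE.
  by rewrite -(gC j jC) gE addrC addKr mulrC mulKf ?gt_eqF.
by rewrite ltr_pdivrMr // mulrC; have := g1_lt i iC; rewrite [g i]gE; lra.
Qed.

Lemma supporting_affine_cell (C : {set 'I_n}) j1 rho : j1 \in C ->
  supporting_affine h C rho -> is_cell R a h C.
Proof.
move=> j1C [rhoC rho_lt].
pose w : 'rV[R]_(d + 1) := row_mx (- rsubmx rho) (const_mx 1).
have wE j :
    dotv w (liftpt R a h j) = rho 0 (lshift d 0) + (h 0 j - (rho *m A) 0 j).
  by rewrite dotv_liftpt row_mxKl mulmx_AmxE row_mxEr mxE mul1r dotvNl; ring.
exists w; split=> [|j]; first by rewrite row_mxEr mxE ltr01.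
split=> [jC | [_ w_min]].
  split=> [|y]; first exact: in_conv_liftpt.
  apply: in_conv_dotv_ge => l.
  rewrite !wE (rhoC j jC) subrr addr0 lerDl subr_ge0.
  by have [/rhoC -> | /rho_lt /ltW] := boolP (l \in C).
apply: contraT => /rho_lt jC.
by have := w_min _ (in_conv_liftpt j1); rewrite !wE (rhoC j1 j1C) subrr; lra.
Qed.

End PointConfiguration.

Section Simplex.
Variables (R : realType) (d n : nat) (a : 'I_n -> 'rV[int]_d).
Variables (I : {set 'I_n}) (j0 : 'I_n).
Hypothesis simplexI : is_dsimplex R a I.
Let cardI : #|I| = d.+1 := simplexI.1.
Let affI : aff_indep R a I := simplexI.2.
Local Notation A := (Amx R a).

Definition vertex (k : 'I_(1 + d)) : 'I_n := nth j0 (enum I) k.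

Lemma size_enum_simplex : size (enum I) = (1 + d)%N.
Proof. by rewrite -cardE cardI. Qed.

Lemma vertex_in k : vertex k \in I.
Proof. by rewrite -mem_enum mem_nth // size_enum_simplex. Qed.

Lemma vertex_inj : injective vertex.
Proof.
move=> k l /eqP; rewrite nth_uniq ?enum_uniq ?size_enum_simplex //.
by move/eqP/val_inj.
Qed.

Lemma vertexP j : j \in I -> exists k, vertex k = j.
Proof.
move=> jI; have lt_jd : (index j (enum I) < 1 + d)%N.
  by rewrite -size_enum_simplex index_mem mem_enum.
by exists (Ordinal lt_jd); rewrite /vertex nth_index ?mem_enum.
Qed.

Lemma colsq_enum (M : 'M[R]_(1 + d, n)) : colsq M (enum I) = colsub vertex M.
Proof.
by apply/matrixP => r k; rewrite !mxE (nth_map j0) ?size_enum_simplex.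
Qed.

Lemma colsq_rcons_enum h i :
  colsq (Ahmx a h) (rcons (enum I) i) =
  block_mx (colsub vertex A) (col i A) (colsub vertex h) (h 0 i)%:M.
Proof.
apply/matrixP => r c; rewrite mxE map_rcons nth_rcons size_map size_enum_simplex.
rewrite -(splitK c) -(splitK r).
case: (split c) => c'; case: (split r) => r' /=.
- rewrite ltn_ord (nth_map j0) ?size_enum_simplex //= block_mxEul col_mxEu.
  by rewrite [RHS]mxE.
- rewrite ltn_ord (nth_map j0) ?size_enum_simplex //= block_mxEdl col_mxEd.
  by rewrite [RHS]mxE (ord1 r').
- by rewrite ord1 addn0 ltnn eqxx /= block_mxEur col_mxEu [RHS]mxE.
- by rewrite !ord1 addn0 ltnn eqxx /= block_mxEdr col_mxEd [RHS]mxE eqxx mulr1n.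
Qed.

Local Notation B := (colsub vertex A).

Lemma dI_vertex : dI R a I = \det B.
Proof. by rewrite /dI colsq_enum. Qed.

Lemma vertex_mx_unit : B \in unitmx.
Proof.
rewrite unitmxE unitfE -det_tr; apply/negP => /det0P [u u_neq0 uBt0].
pose S : 'M[R]_(n, 1 + d) := colsub vertex 1%:M.
have StS : S^T *m S = 1%:M.
  rewrite trmx_mxsub trmx1 -mxsub_mul mul1mx.
  by apply/matrixP => k l; rewrite !mxE (inj_eq vertex_inj).
have uSt_supp j : j \notin I -> (u *m S^T) 0 j = 0.
  move=> jI; rewrite mxE big1 // => k _; rewrite !mxE.
  rewrite (_ : (j == vertex k) = false) ?mulr0 //.
  by apply: contraNF jI => /eqP ->; apply: vertex_in.
have /(aff_indep_ker affI uSt_supp) uSt0 : A *m (u *m S^T)^T = 0.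
  rewrite trmx_mul trmxK mulmxA mulmx_colsub mulmx1.
  by rewrite -(trmxK B) -trmx_mul uBt0 trmx0.
by move/eqP: u_neq0; apply; rewrite -[u]mulmx1 -StS mulmxA uSt0 mul0mx.
Qed.

Lemma dI_neq0 : dI R a I != 0.
Proof. by rewrite dI_vertex -unitfE -unitmxE vertex_mx_unit. Qed.

Definition interpolant (h : 'rV[R]_n) : 'rV[R]_(1 + d) :=
  colsub vertex h *m invmx B.

Lemma mulmx_vertexE (rho : 'rV[R]_(1 + d)) k :
  (rho *m B) 0 k = (rho *m A) 0 (vertex k).
Proof. by rewrite mulmx_colsub mxE. Qed.

Lemma interpolantE (h : 'rV[R]_n) j :
  j \in I -> (interpolant h *m A) 0 j = h 0 j.
Proof.
by case/vertexP=> k <-; rewrite -mulmx_vertexE mulmxKV ?vertex_mx_unit // mxE.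
Qed.

Lemma interpolant_unique (h : 'rV[R]_n) (rho : 'rV[R]_(1 + d)) :
  (forall j, j \in I -> (rho *m A) 0 j = h 0 j) -> rho = interpolant h.
Proof.
move=> rhoI; rewrite /interpolant; have -> : colsub vertex h = rho *m B.
  by apply/rowP => k; rewrite mulmx_vertexE rhoI ?vertex_in // mxE.
by rewrite mulmxK ?vertex_mx_unit.
Qed.

Lemma cell_interpolantP (h : 'rV[R]_n) :
  is_cell R a h I <-> forall i, i \notin I -> (interpolant h *m A) 0 i < h 0 i.
Proof.
have vertex0_in := vertex_in 0.
split=> [/(cell_supporting_affine vertex0_in) | lt_h].
  by case=> rho [/interpolant_unique <-].
by apply: (supporting_affine_cell vertex0_in); split; first exact: interpolantE.
Qed.

Lemma dIiE (h : 'rV[R]_n) i :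
  dIi R a I i h = dI R a I * (h 0 i - (interpolant h *m A) 0 i).
Proof.
rewrite /dIi colsq_rcons_enum det_block_schur ?vertex_mx_unit // det_mx11 dI_vertex.
rewrite !mxE eqxx mulr1n; congr (_ * (_ - _)); apply: eq_bigr => j _.
by rewrite [col i A j 0]mxE.
Qed.

Variable m : 'I_n -> 'rV[R]_n.
Hypothesis mE : forall i, i \notin I -> forall h, dIi R a I i h = dotv (m i) h.

Lemma cell_dotv_gt0P (h : 'rV[R]_n) :
  is_cell R a h I <-> forall i, i \notin I -> 0 < dotv (dI R a I *: m i) h.
Proof.
have gt0E i : i \notin I ->
    (0 < dotv (dI R a I *: m i) h) = ((interpolant h *m A) 0 i < h 0 i).
  move=> iI; rewrite dotvZl -mE // dIiE // mulrA -expr2 pmulr_rgt0 ?subr_gt0 //.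
  by rewrite exprn_even_gt0 //= dI_neq0.
rewrite cell_interpolantP.
by split=> lt_h i iI; [rewrite gt0E | rewrite -gt0E]; auto.
Qed.

(* Rows of [A] are affine in the points, so they are their own interpolants. *)
Lemma Amx_m_eq0 i : i \notin I -> A *m (m i)^T = 0.
Proof.
move=> iI; apply/mulmx_tr_eq0 => r; rewrite -mE // dIiE.
rewrite -(@interpolant_unique _ (delta_mx 0 r)) => [|j _]; rewrite -rowE //.
by rewrite subrr mulr0.
Qed.

Lemma m_entry i j : i \notin I -> j \notin I -> m i 0 j = dI R a I * (i == j)%:R.
Proof.
move=> iI jI; rewrite -dotv_delta -mE // dIiE.
rewrite -(@interpolant_unique _ 0) => [|l lI]; rewrite mul0mx !mxE eqxx /=.
  by rewrite subr0.
by have /negbTE -> : l != j by apply: contraNneq jI => <-.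
Qed.

Lemma Amx_comb_m_eq0 (c : 'I_n -> R) :
  A *m (\sum_(i | i \notin I) c i *: (dI R a I *: m i))^T = 0.
Proof.
rewrite linear_sum mulmx_sumr big1 // => i iI.
by rewrite scalerA linearZ /= -scalemxAr Amx_m_eq0 ?scaler0.
Qed.

Lemma kerA_comb_m (v : 'rV[R]_n) : A *m v^T = 0 ->
  v = \sum_(i | i \notin I) (v 0 i / (dI R a I * dI R a I)) *: (dI R a I *: m i).
Proof.
move=> vA; apply/eqP; rewrite -subr_eq0; apply/eqP/(aff_indep_ker affI).
  move=> j jI; rewrite !mxE summxE (bigD1 j) //= big1 => [|i /andP [iI /negbTE ij]].
    rewrite !mxE m_entry // eqxx mulr1 addr0 divfK ?subrr //.
    by rewrite mulf_neq0 ?dI_neq0.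
  by rewrite !mxE m_entry // ij !mulr0.
by rewrite raddfB mulmxBr vA Amx_comb_m_eq0 subrr.
Qed.

End Simplex.

Theorem lemma2p2 (R : realType) (d n p : nat)
  (a : 'I_n -> 'rV[int]_d) (I : 'I_p -> {set 'I_n})
  (m : 'I_p -> 'I_n -> 'rV[R]_n) :
  injective a ->
  (d + 2 <= n)%N ->
  full_dim R a ->
  (1 <= p)%N ->
  (forall k, is_dsimplex R a (I k)) ->
  (exists h : 'rV[R]_n, forall k, is_cell R a h (I k)) ->
  (* m k i = m^{I_k}_i : the vector with d_{I_k u {i}}(h) = <m, h> for all h *)
  (forall k i, i \notin I k -> forall h, dIi R a (I k) i h = dotv (m k i) h) ->
  (* the cone is nonempty *)
  (exists h : 'rV[R]_n, forall k, is_cell R a h (I k)) /\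
  (* the cone is defined by the strict linear inequalities *)
  (forall h : 'rV[R]_n, (forall k, is_cell R a h (I k)) <->
     (forall k i, i \notin I k -> 0 < dotv (dI R a (I k) *: m k i) h)) /\
  (* the vectors d_{I_k} m^{I_k}_i span ker A *)
  (forall v : 'rV[R]_n, Amx R a *m v^T = 0 <->
     exists c : 'I_p -> 'I_n -> R,
       v = \sum_k \sum_(i | i \notin I k) c k i *: (dI R a (I k) *: m k i)).
Proof.
move=> _ n_ge _ p_gt0 simplex cone_nonempty mE.
pose j0 : 'I_n := Ordinal (ltnW (leq_trans (leq_addl d 2) n_ge)).
have cellE k := cell_dotv_gt0P j0 (simplex k) (mE k).
split=> //; split=> [h | v].
  by split=> [cell_h k | gt0 k]; [apply/cellE | apply/cellE => i; apply: gt0].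
split=> [vA | [c ->]]; last first.
  rewrite linear_sum mulmx_sumr big1 // => k _ /=.
  exact: (Amx_comb_m_eq0 j0 (simplex k) (mE k) (c k)).
pose k0 : 'I_p := Ordinal p_gt0.
exists (fun k i => if k == k0 then v 0 i / (dI R a (I k) * dI R a (I k)) else 0).
rewrite (bigD1 k0) //= [X in _ + X]big1 ?addr0 => [|k /negbTE ->]; last first.
  by rewrite big1 // => i _; rewrite scale0r.
exact: (kerA_comb_m j0 (simplex k0) (mE k0) vA).
Qed.
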